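(* Fix an integer $n\ge 0$ and $\mathbb K\in\{\mathbb R,\mathbb C\}$. Let $\mathcal B^0\supset\mathcal B^1\supset\cdots\supset\mathcal B^{n+1}$ be linear subspaces and let $\mathcal L=\mathcal L_0,\dots,\mathcal L_n$, $\mathcal L(\epsilon,\cdot)$ ($\epsilon\in(0,1)$) be linear operators satisfying conditions (I), (II), (IV) of the context. Assume also: (a) each $\mathcal B^k$ is a Banach space; (b) $\nu$ is a bounded linear functional on $\mathcal B^0$; $\mathcal L_j$ is bounded $\mathcal B^i\to\mathcal B^{i-j}$ and $\sup_{\epsilon}\|\tilde{\mathcal L}_j(\epsilon,\cdot)\|_{\mathcal B^i\to\mathcal B^{i-j}}<+\infty$ for $j=0,\dots,n$ and $i=j,\dots,n+1$; $\sup_\epsilon\|g(\epsilon,\cdot)\|_{\mathcal B^i}<+\infty$ for $i=0,\dots,n+1$; $\mathcal R_\lambda$ is bounded $\mathcal B^1\to\mathcal B^0$ and bounded on $\mathcal B^i$ for $i=1,\dots,n+1$; and $\mathcal R_\lambda:\mathcal B^1\to\mathcal B^0$ is weak bounded; (c) $\lim_{\epsilon\to0}\|\tilde{\mathcal L}_j(\epsilon,\cdot)\|_{\mathcal B^{i+1}\to\mathcal B^{i-j}}=0$ for each $j=0,\dots,n$ and $i=j,\dots,n$. Then $\|\tilde g_n(\epsilon,\cdot)\|_{\mathcal B^0}\to0$ as $\epsilon\to0$. In particular, $\|\tilde g_k(\epsilon,\cdot)\|_{\mathcal B^i}\to0$ for $k,i\ge0$ with $k+i\le n$, and $\sup_{\epsilon}\|\tilde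 g_k(\epsilon,\cdot)\|_{\mathcal B^{n+1-k}}<\infty$ for $k=0,\dots,n$.
   Context: Conditions. (I) For each $j=0,\dots,n$ and $i=j,\dots,n$, $\mathcal L_j$ maps $\mathcal B^i$ linearly into $\mathcal B^{i-j}$. (II) $\mathcal L:\mathcal B^0\to\mathcal B^0$ decomposes as $\mathcal L=\lambda(h\otimes\nu)+\mathcal R$ with $(\lambda,h,\nu)\in\mathbb K\times\mathcal B^{n+1}\times(\mathcal B^0)^*$ ($(\mathcal B^0)^*$ = linear functionals), $\lambda\neq0$, $\nu\circ\mathcal L=\lambda\nu$, $\mathcal Lh=\lambda h$, $\nu(h)=1$, where $(h\otimes\nu)f=\nu(f)h$; and there is a linear subspace $\mathcal D^0$ with $\mathcal B^1\subset\mathcal D^0\subset\mathcal B^0$ such that every $f\in\mathcal D^0$ has exactly one $g\in\mathcal B^0$ with $(\mathcal R-\lambda\mathcal I)g=f$; this inverse $\mathcal R_\lambda:\mathcal D^0\to\mathcal B^0$ satisfies $\mathcal R_\lambda\mathcal B^i\subset\mathcal B^i$ for $1\le i\le n+1$. (IV) For each $\epsilon\in(0,1)$, $\mathcal L(\epsilon,\cdot)$ maps $\mathcal B^{n+1}$ into $\mathcal B^0$ and there are $\lambda(\epsilon)\in\mathbb K$, $h(\epsilon,\cdot)\in\mathcal B^{n+1}$ with $\mathcal L(\epsilon,h(\epsilon,\cdot))=\lambda(\epsilon)h(\epsilon,\cdot)$ and $\nu(h(\epsilon,\cdot))\ne0$. Notation. $\tilde{\mathcal L}_j(\epsilon,\cdot):=(\mathcal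 L(\epsilon,\cdot)-\mathcal L-\sum_{i=1}^j\mathcal L_i\epsilon^i)/\epsilon^j$; $\mathcal P=h\otimes\nu$; $\mathcal S:=\mathcal R_\lambda(\mathcal I-\mathcal P)$; $g(\epsilon,\cdot):=h(\epsilon,\cdot)/\nu(h(\epsilon,\cdot))$. Coefficients: $g_0=h$ and recursively $\lambda_k=\sum_{j=1}^k\nu(\mathcal L_jg_{k-j})$, $g_k=\sum_{j=1}^k\mathcal S(\lambda_j\mathcal I-\mathcal L_j)g_{k-j}$ for $k=1,\dots,n$. Remainders: $\tilde g_k(\epsilon,\cdot):=(g(\epsilon,\cdot)-\sum_{i=0}^k g_i\epsilon^i)/\epsilon^k$ for $0\le k\le n$. An operator $\mathcal A:\mathcal B^1\to\mathcal B^0$ is weak bounded if for every $\eta>0$ there is $c(\eta)>0$ with $\|\mathcal Af\|_{\mathcal B^0}\le c(\eta)\|f\|_{\mathcal B^0}+\eta\|f\|_{\mathcal B^1}$ for all $f\in\mathcal B^1$. *)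

From Stdlib Require Export Reals.
From mathcomp Require Import all_boot all_order all_algebra.
From mathcomp Require Export Rstruct complex.

Set Implicit Arguments.
Unset Strict Implicit.
Unset Printing Implicit Defensive.

Import Order.TTheory GRing.Theory Num.Theory.
Local Open Scope ring_scope.

Section Defs.
Variables (K : numFieldType) (V : lmodType K).

Definition subspace (A : V -> Prop) : Prop :=
  A 0 /\ (forall (a : K) x y, A x -> A y -> A (a *: x + y)).

(* N is a norm on the subspace A (values are nonnegative, hence real, in K). *)
Definition is_norm_on (A : V -> Prop) (N : V -> K) : Prop :=
  [/\ (forall x, A x -> 0 <= N x),
      (forall x, A x -> N x = 0 -> x = 0),
      (forall x y, A x -> A y -> N (x + y) <= N x + N y) &
      (forall (a : K) x, A x -> N (a *: x) = `|a| * N x)].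

Definition complete_on (A : V -> Prop) (N : V -> K) : Prop :=
  forall u : nat -> V, (forall m, A (u m)) ->
    (forall e : K, 0 < e -> exists m0 : nat, forall p q : nat, (m0 <= p)%N -> (m0 <= q)%N ->
        N (u p - u q) < e) ->
    exists x, A x /\
      (forall e : K, 0 < e -> exists m0 : nat, forall p : nat, (m0 <= p)%N -> N (u p - x) < e).

Definition banach_on (A : V -> Prop) (N : V -> K) : Prop :=
  [/\ subspace A, is_norm_on A N & complete_on A N].

Definition linear_on (A : V -> Prop) (f : V -> V) : Prop :=
  forall (a : K) x y, A x -> A y -> f (a *: x + y) = a *: f x + f y.

Definition bounded_op (A B : V -> Prop) (NA NB : V -> K) (f : V -> V) : Prop :=
  exists M : K, forall x, A x -> B (f x) /\ NB (f x) <= M * NA x.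

Definition Ltilde (L : nat -> V -> V) (Leps : K -> V -> V) (j : nat) (eps : K)
  (x : V) : V :=
  eps ^- j *: (Leps eps x - L 0%N x - \sum_(1 <= i < j.+1) eps ^+ i *: L i x).

(* S = R_lambda (I - P), P = h (x) nu *)
Definition Sop (Rl : V -> V) (h : V) (nu : V -> K) : V -> V :=
  fun x => Rl (x - nu x *: h).

(* The list [:: (lambda_0, g_0); ...; (lambda_m, g_m)] of coefficients, with
   g_0 = h, lambda_0 := lambda (unused), and recursively
   lambda_k = sum_{j=1}^k nu (L_j g_{k-j}),
   g_k = sum_{j=1}^k S (lambda_j I - L_j) g_{k-j}. *)
Fixpoint coefs (L : nat -> V -> V) (S : V -> V) (lam : K) (h : V)
  (nu : V -> K) (m : nat) : seq (K * V) :=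
  match m with
  | 0%N => [:: (lam, h)]
  | m'.+1 =>
      let s := coefs L S lam h nu m' in
      let k := m'.+1 in
      let lk := \sum_(1 <= j < k.+1) nu (L j (nth (0, 0) s (k - j)%N).2) in
      let s' := rcons s (lk, 0) in
      let gk := \sum_(1 <= j < k.+1)
          S ((nth (0, 0) s' j).1 *: (nth (0, 0) s (k - j)%N).2
             - L j (nth (0, 0) s (k - j)%N).2) in
      rcons s (lk, gk)
  end.

Definition lamk L S lam h nu (k : nat) : K := (nth (0, 0) (coefs L S lam h nu k) k).1.
Definition gk L S lam h nu (k : nat) : V := (nth (0, 0) (coefs L S lam h nu k) k).2.

Definition geps (nu : V -> K) (heps : K -> V) (eps : K) : V :=
  (nu (heps eps))^-1 *: heps eps.

Definition gtilde L S lam h nu heps (k : nat) (eps : K) : V :=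
  eps ^- k *: (geps nu heps eps - \sum_(0 <= i < k.+1) eps ^+ i *: gk L S lam h nu i).

End Defs.

Local Notation in01 eps := (0 < eps /\ eps < 1).

(* The statement of Theorem 6 for a fixed scalar field K. Parameters in (0,1)
   are elements eps of K with 0 < eps < 1 (for K = C this forces eps real). *)
Definition theorem6_for (K : numFieldType) : Prop :=
  forall (V : lmodType K) (n : nat)
    (B : nat -> V -> Prop) (N : nat -> V -> K)
    (L : nat -> V -> V)
    (Leps : K -> V -> V)
    (lam : K) (h : V) (nu : V -> K)
    (D0 : V -> Prop) (Rl : V -> V)
    (lameps : K -> K) (heps : K -> V),
  (forall x, B 0%N x) ->
  (forall i, (i <= n)%N -> forall x, B i.+1 x -> B i x) ->
  (forall i, (i <= n.+1)%N -> banach_on (B i) (N i)) ->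
  (forall j, (j <= n)%N -> linear_on (B j) (L j)) ->
  (forall j i, (j <= i <= n)%N -> forall x, B i x -> B (i - j)%N (L j x)) ->
  lam != 0 ->
  B n.+1 h ->
  (forall (a : K) x y, nu (a *: x + y) = a * nu x + nu y) ->
  (forall f, nu (L 0%N f) = lam * nu f) ->
  L 0%N h = lam *: h ->
  nu h = 1 ->
  subspace D0 ->
  (forall x, B 1%N x -> D0 x) ->
  (* R = L - lam (h (x) nu); Rl is the inverse of (R - lam I) on D0, which is unique *)
  (forall f, D0 f -> L 0%N (Rl f) - (lam * nu (Rl f)) *: h - lam *: Rl f = f) ->
  (forall f, D0 f -> forall g1 g2,
      L 0%N g1 - (lam * nu g1) *: h - lam *: g1 = f ->
      L 0%N g2 - (lam * nu g2) *: h - lam *: g2 = f -> g1 = g2) ->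
  (forall i, (1 <= i <= n.+1)%N -> forall x, B i x -> B i (Rl x)) ->
  (forall eps, in01 eps -> linear_on (fun _ => True) (Leps eps)) ->
  (forall eps, in01 eps ->
     [/\ B n.+1 (heps eps), Leps eps (heps eps) = lameps eps *: heps eps
       & nu (heps eps) != 0]) ->
  (exists M : K, forall f, `|nu f| <= M * N 0%N f) ->
  (forall j i, (j <= n)%N -> (j <= i <= n.+1)%N ->
     bounded_op (B i) (B (i - j)%N) (N i) (N (i - j)%N) (L j)) ->
  (forall j i, (j <= n)%N -> (j <= i <= n.+1)%N ->
     exists M : K, forall eps, in01 eps ->
       forall x, B i x -> B (i - j)%N (Ltilde L Leps j eps x) /\
                 N (i - j)%N (Ltilde L Leps j eps x) <= M * N i x) ->
  (forall i, (i <= n.+1)%N ->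
     exists M : K, forall eps, in01 eps -> N i (geps nu heps eps) <= M) ->
  bounded_op (B 1%N) (B 0%N) (N 1%N) (N 0%N) Rl ->
  (forall i, (1 <= i <= n.+1)%N -> bounded_op (B i) (B i) (N i) (N i) Rl) ->
  (forall eta : K, 0 < eta -> exists c : K, 0 < c /\
     forall f, B 1%N f -> N 0%N (Rl f) <= c * N 0%N f + eta * N 1%N f) ->
  (forall j i, (j <= i <= n)%N ->
     forall delta : K, 0 < delta -> exists eta : K, 0 < eta /\
       forall eps, in01 eps -> eps < eta ->
         forall x, B i.+1 x -> B (i - j)%N (Ltilde L Leps j eps x) /\
                   N (i - j)%N (Ltilde L Leps j eps x) <= delta * N i.+1 x) ->
  let S := Sop Rl h nu in
  let gt := gtilde L S lam h nu heps in
  [/\ (forall delta : K, 0 < delta -> exists eta : K, 0 < eta /\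
         forall eps, in01 eps -> eps < eta -> N 0%N (gt n eps) <= delta),
      (forall k i, (k + i <= n)%N ->
         forall delta : K, 0 < delta -> exists eta : K, 0 < eta /\
           forall eps, in01 eps -> eps < eta -> N i (gt k eps) <= delta) &
      (forall k, (k <= n)%N -> exists M : K, forall eps, in01 eps ->
         B (n.+1 - k)%N (gt k eps) /\ N (n.+1 - k)%N (gt k eps) <= M)].

From Stdlib Require Import Reals.
From mathcomp Require Import all_boot all_order all_algebra.
From mathcomp Require Import Rstruct complex.
From mathcomp Require Import ssrAC zify.

Set Implicit Arguments.
Unset Strict Implicit.
Unset Printing Implicit Defensive.

Import Order.TTheory GRing.Theory Num.Theory.
Local Open Scope ring_scope.

(* Expanding the eigenvector equation [L(e) g(e) = lambda(e) g(e)] to order [m]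
   shows that the remainder [g~_m] solves [(R - lambda I) g~_m = T_m] with
   [nu T_m = 0], where [T_m] ([src m]) involves only the lower remainders
   [g~_k] ([k < m]), the operator remainder [L~_m] and the [lambda_j]; hence
   [g~_m = S T_m].  As [T_m] lies in [B^(n+1-m)], induction on [m] bounds [g~_m]
   in [B^(n+1-m)], and [g~_k = e (g_(k+1) + g~_(k+1))] then makes [g~_k] small in
   [B^i] for [i + k <= n].  For [k = n] this only makes [T_n] small in [B^0]
   while keeping it bounded in [B^1]; the weak boundedness of
   [R_lambda : B^1 -> B^0] turns this into smallness of [g~_n = S T_n] in [B^0]. *)

Section Subspace.
Variables (K : numFieldType) (V : lmodType K) (A : V -> Prop).
Hypothesis sA : subspace A.

Lemma subspace0 : A 0. Proof. by case: sA. Qed.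

Lemma subspaceD x y : A x -> A y -> A (x + y).
Proof. by case: sA => _ sAl Ax Ay; rewrite -[x]scale1r; apply: sAl. Qed.

Lemma subspaceZ a x : A x -> A (a *: x).
Proof. by case: sA => A0 sAl Ax; rewrite -[_ *: _]addr0; apply: sAl. Qed.

Lemma subspaceB x y : A x -> A y -> A (x - y).
Proof. by move=> Ax Ay; rewrite -scaleN1r; apply: subspaceD; last apply: subspaceZ. Qed.

Lemma subspace_sum_nat m p (F : nat -> V) :
  (forall i, (m <= i < p)%N -> A (F i)) -> A (\sum_(m <= i < p) F i).
Proof.
move=> AF; rewrite big_nat_cond; apply: big_ind => //; first exact: subspace0.
  exact: subspaceD.
by move=> i /andP[/AF].
Qed.

End Subspace.

Section LinearOn.
Variables (K : numFieldType) (V : lmodType K) (A : V -> Prop).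
Hypothesis sA : subspace A.
Variables (W : lmodType K) (f : V -> W).
Hypothesis fL : forall a x y, A x -> A y -> f (a *: x + y) = a *: f x + f y.

Lemma linear_on0 : f 0 = 0.
Proof.
have := fL 1 (subspace0 sA) (subspace0 sA); rewrite !scale1r addr0.
by move/(congr1 (fun v => v - f 0)); rewrite addrK subrr.
Qed.

Lemma linear_onD x y : A x -> A y -> f (x + y) = f x + f y.
Proof. by move=> Ax Ay; have := fL 1 Ax Ay; rewrite !scale1r. Qed.

Lemma linear_onZ a x : A x -> f (a *: x) = a *: f x.
Proof. by move=> Ax; have := fL a Ax (subspace0 sA); rewrite !addr0 linear_on0 addr0. Qed.

Lemma linear_onB x y : A x -> A y -> f (x - y) = f x - f y.
Proof.
move=> Ax Ay; rewrite -scaleN1r -[- f y]scaleN1r -linear_onZ //.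
by rewrite linear_onD //; apply: (subspaceZ sA).
Qed.

Lemma linear_on_sum_nat m p (F : nat -> V) :
  (forall i, (m <= i < p)%N -> A (F i)) ->
  f (\sum_(m <= i < p) F i) = \sum_(m <= i < p) f (F i).
Proof.
move=> AF; pose P u v := A u /\ f u = v.
suff [] : P (\sum_(m <= i < p) F i) (\sum_(m <= i < p) f (F i)) by [].
rewrite big_nat_cond [X in P _ X]big_nat_cond.
apply: big_ind2 => [|u1 v1 u2 v2 [Au1 <-] [Au2 <-]|i /andP[/AF Ai _]] //.
  by split; [exact: (subspace0 sA) | exact: linear_on0].
by split; [exact: (subspaceD sA) | exact: linear_onD].
Qed.

End LinearOn.

Lemma subspaceT (K : numFieldType) (V : lmodType K) : subspace (fun _ : V => True).
Proof. by []. Qed.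

Definition normed_subspace (K : numFieldType) (V : lmodType K) (A : V -> Prop)
  (N : V -> K) : Prop := subspace A /\ is_norm_on A N.

Section NormedSubspace.
Variables (K : numFieldType) (V : lmodType K) (A : V -> Prop) (N : V -> K).
Hypothesis nA : normed_subspace A N.

Lemma normed_ge0 x : A x -> 0 <= N x.
Proof. by case: nA => _ [N0 *]; apply: N0. Qed.

Lemma normed_leD x y : A x -> A y -> N (x + y) <= N x + N y.
Proof. by case: nA => _ [_ _ ND _]; apply: ND. Qed.

Lemma normedZ a x : A x -> N (a *: x) = `|a| * N x.
Proof. by case: nA => _ [_ _ _ NZ]; apply: NZ. Qed.

Lemma normed0 : N 0 = 0.
Proof. by rewrite -(scale0r 0) normedZ ?normr0 ?mul0r //; apply: subspace0 nA.1. Qed.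

End NormedSubspace.

Lemma normed_subspace_scalar (K : numFieldType) :
  normed_subspace (fun _ : K^o => True) (fun a : K => `|a|).
Proof.
split=> //; split=> [a _ | a _ /normr0_eq0 // | a b _ _ | a b _]; first exact: normr_ge0.
  exact: ler_normD.
exact: normrM.
Qed.

Lemma exists_gt0_le2 (K : numFieldType) (d1 d2 : K) :
  0 < d1 -> 0 < d2 -> exists2 d, 0 < d & d <= d1 /\ d <= d2.
Proof.
move=> d1_gt0 d2_gt0.
by case/orP: (real_leVge (gtr0_real d1_gt0) (gtr0_real d2_gt0)) => ?; [exists d1 | exists d2].
Qed.

Lemma divDr1_gt0 (K : numFieldType) (M d : K) : 0 <= M -> 0 < d -> 0 < d / (M + 1).
Proof. by move=> M_ge0 d_gt0; rewrite divr_gt0 // ltr_wpDl. Qed.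

Lemma mulr_divDr1_le (K : numFieldType) (M d : K) :
  0 <= M -> 0 < d -> M * (d / (M + 1)) <= d.
Proof.
move=> M_ge0 d_gt0; rewrite mulrA ler_pdivrMr ?ltr_wpDl //.
by rewrite mulrDr mulr1 mulrC lerDl ltW.
Qed.

Lemma le_normlM (K : numFieldType) (M t u : K) :
  0 <= u -> 0 <= t -> u <= M * t -> u <= `|M| * t.
Proof.
move=> u_ge0 t_ge0 le_uMt; have Mt_ge0 := le_trans u_ge0 le_uMt.
by rewrite -(ger0_norm t_ge0) -normrM ger0_norm.
Qed.

Section Families.
Variable K : numFieldType.

Definition in01 (e : K) : Prop := 0 < e /\ e < 1.

Lemma in01_neq0 e : in01 e -> e != 0.
Proof. by case=> /lt0r_neq0. Qed.

Lemma in01_half : in01 2^-1.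
Proof. by split; rewrite ?invr_gt0 ?invf_lt1 ?ltr1n. Qed.

Definition bounded_fam (V : lmodType K) (A : V -> Prop) (N : V -> K) (x : K -> V) :=
  (forall e, in01 e -> A (x e)) /\
  exists2 M, 0 <= M & forall e, in01 e -> N (x e) <= M.

Definition vanishing_fam (V : lmodType K) (A : V -> Prop) (N : V -> K) (x : K -> V) :=
  (forall e, in01 e -> A (x e)) /\
  forall d, 0 < d -> exists2 eta, 0 < eta & forall e, in01 e -> e < eta -> N (x e) <= d.

Definition bounded_scalar (a : K -> K) :=
  bounded_fam (V := K^o) (fun _ => True) (fun z => `|z|) a.
Definition vanishing_scalar (a : K -> K) :=
  vanishing_fam (V := K^o) (fun _ => True) (fun z => `|z|) a.

Lemma bounded_scalar_cst (c : K) : bounded_scalar (fun _ => c).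
Proof. by split=> //; exists `|c|. Qed.

Lemma vanishing_scalar_id : vanishing_scalar (fun e => e).
Proof.
split=> // d d_gt0; exists d => // e [e_gt0 _] /ltW.
by rewrite ger0_norm // ltW.
Qed.

Section FamiliesInSubspace.
Variables (V : lmodType K) (A : V -> Prop) (N : V -> K).
Implicit Types x y : K -> V.

Lemma eq_bounded_fam x y :
  (forall e, in01 e -> x e = y e) -> bounded_fam A N x -> bounded_fam A N y.
Proof.
move=> exy [Ax [M M_ge0 Nx]].
by split=> [e e01|]; last exists M => // e e01; rewrite -exy //; [apply: Ax | apply: Nx].
Qed.

Lemma eq_vanishing_fam x y :
  (forall e, in01 e -> x e = y e) -> vanishing_fam A N x -> vanishing_fam A N y.
Proof.
move=> exy [Ax Nx]; split=> [e e01|d d_gt0]; first by rewrite -exy //; apply: Ax.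
by have [eta ? Nxd] := Nx d d_gt0; exists eta => // e e01 ?; rewrite -exy //; apply: Nxd.
Qed.

Hypothesis nA : normed_subspace A N.
Let sA : subspace A := nA.1.

Lemma bounded_fam_cst v : A v -> bounded_fam A N (fun=> v).
Proof. by move=> Av; split=> //; exists (N v) => [|e _]; first exact: (normed_ge0 nA Av). Qed.

Lemma bounded_famD x y :
  bounded_fam A N x -> bounded_fam A N y -> bounded_fam A N (fun e => x e + y e).
Proof.
move=> [Ax [Mx Mx_ge0 Nx]] [Ay [My My_ge0 Ny]].
split=> [e e01|]; first exact: subspaceD (Ax e e01) (Ay e e01).
exists (Mx + My) => [|e e01]; first exact: addr_ge0.
apply: le_trans (normed_leD nA (Ax e e01) (Ay e e01)) _.
exact: lerD (Nx e e01) (Ny e e01).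
Qed.

Lemma bounded_famZ (a : K -> K) x :
  bounded_scalar a -> bounded_fam A N x -> bounded_fam A N (fun e => a e *: x e).
Proof.
move=> [_ [Ma Ma_ge0 Na]] [Ax [Mx Mx_ge0 Nx]].
split=> [e e01|]; first exact: subspaceZ (Ax e e01).
exists (Ma * Mx) => [|e e01]; first exact: mulr_ge0.
rewrite (normedZ nA) //; last exact: Ax.
by apply: ler_pM; [exact: normr_ge0 | exact: (normed_ge0 nA (Ax e e01)) | apply: Na | apply: Nx].
Qed.

Lemma bounded_famB x y :
  bounded_fam A N x -> bounded_fam A N y -> bounded_fam A N (fun e => x e - y e).
Proof.
move=> Bx By; apply: bounded_famD Bx _.
by apply: eq_bounded_fam (bounded_famZ (bounded_scalar_cst (-1)) By) => e _; rewrite scaleN1r.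
Qed.

Lemma bounded_fam_sum (I : eqType) (r : seq I) (F : I -> K -> V) :
  (forall i, i \in r -> bounded_fam A N (F i)) ->
  bounded_fam A N (fun e => \sum_(i <- r) F i e).
Proof.
elim: r => [|i r IH] BF.
  by apply: eq_bounded_fam (bounded_fam_cst (subspace0 sA)) => e _; rewrite big_nil.
apply: eq_bounded_fam (bounded_famD (BF i _) (IH _)) => [e _||j jr].
- by rewrite big_cons.
- exact: mem_head.
- by apply: BF; rewrite inE jr orbT.
Qed.

Lemma vanishing_famD x y :
  vanishing_fam A N x -> vanishing_fam A N y -> vanishing_fam A N (fun e => x e + y e).
Proof.
move=> [Ax Nx] [Ay Ny]; split=> [e e01|d d_gt0]; first exact: subspaceD (Ax e e01) (Ay e e01).
have d2_gt0 : 0 < d / 2 by rewrite divr_gt0.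
have [[eta1 eta1_gt0 Nx1] [eta2 eta2_gt0 Ny2]] := (Nx _ d2_gt0, Ny _ d2_gt0).
have [eta eta_gt0 [le_eta1 le_eta2]] := exists_gt0_le2 eta1_gt0 eta2_gt0.
exists eta => // e e01 lt_e_eta.
apply: le_trans (normed_leD nA (Ax e e01) (Ay e e01)) _.
rewrite [leRHS]splitr; apply: lerD; [apply: Nx1 | apply: Ny2] => //.
  exact: lt_le_trans le_eta1.
exact: lt_le_trans le_eta2.
Qed.

Lemma vanishing_famZr (a : K -> K) x :
  bounded_scalar a -> vanishing_fam A N x -> vanishing_fam A N (fun e => a e *: x e).
Proof.
move=> [_ [Ma Ma_ge0 Na]] [Ax Nx]; split=> [e e01|d d_gt0]; first exact: subspaceZ (Ax e e01).
have [eta eta_gt0 Nxd] := Nx _ (divDr1_gt0 Ma_ge0 d_gt0).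
exists eta => // e e01 lt_e_eta; rewrite (normedZ nA) //; last exact: Ax.
apply: le_trans (mulr_divDr1_le Ma_ge0 d_gt0).
by apply: ler_pM; [exact: normr_ge0 | exact: (normed_ge0 nA (Ax e e01)) | apply: Na | apply: Nxd].
Qed.

Lemma vanishing_famZl (a : K -> K) x :
  vanishing_scalar a -> bounded_fam A N x -> vanishing_fam A N (fun e => a e *: x e).
Proof.
move=> [_ Na] [Ax [Mx Mx_ge0 Nx]]; split=> [e e01|d d_gt0]; first exact: subspaceZ (Ax e e01).
have [eta eta_gt0 Nad] := Na _ (divDr1_gt0 Mx_ge0 d_gt0).
exists eta => // e e01 lt_e_eta; rewrite (normedZ nA) //; last exact: Ax.
apply: le_trans (mulr_divDr1_le Mx_ge0 d_gt0); rewrite mulrC.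
by apply: ler_pM; [exact: (normed_ge0 nA (Ax e e01)) | exact: normr_ge0 | apply: Nx | apply: Nad].
Qed.

Lemma vanishing_famB x y :
  vanishing_fam A N x -> vanishing_fam A N y -> vanishing_fam A N (fun e => x e - y e).
Proof.
move=> Vx Vy; apply: vanishing_famD Vx _.
by apply: eq_vanishing_fam (vanishing_famZr (bounded_scalar_cst (-1)) Vy) => e _; rewrite scaleN1r.
Qed.

Lemma vanishing_fam_sum (I : eqType) (r : seq I) (F : I -> K -> V) :
  (forall i, i \in r -> vanishing_fam A N (F i)) ->
  vanishing_fam A N (fun e => \sum_(i <- r) F i e).
Proof.
elim: r => [|i r IH] VF.
  split=> [e _|d d_gt0]; first by rewrite big_nil; apply: subspace0.
  by exists 1 => // e _ _; rewrite big_nil (normed0 nA) ltW.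
apply: eq_vanishing_fam (vanishing_famD (VF i _) (IH _)) => [e _||j jr].
- by rewrite big_cons.
- exact: mem_head.
- by apply: VF; rewrite inE jr orbT.
Qed.

End FamiliesInSubspace.

Section FamiliesUnderOperators.
Variables (V W : lmodType K) (A : V -> Prop) (N : V -> K) (A' : W -> Prop) (N' : W -> K).
Hypotheses (nA : normed_subspace A N) (nA' : normed_subspace A' N').
Variables (T : K -> V -> W) (x : K -> V).

Lemma bounded_fam_op M :
  (forall e, in01 e -> forall z, A z -> A' (T e z) /\ N' (T e z) <= M * N z) ->
  bounded_fam A N x -> bounded_fam A' N' (fun e => T e (x e)).
Proof.
move=> bT [Ax [Mx Mx_ge0 Nx]]; split=> [e e01|]; first by case: (bT e e01 _ (Ax e e01)).
exists (`|M| * Mx) => [|e e01]; first exact: mulr_ge0.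
have [A'T NT] := bT e e01 _ (Ax e e01).
apply: le_trans (le_normlM (normed_ge0 nA' A'T) (normed_ge0 nA (Ax e e01)) NT) _.
by apply: ler_wpM2l => //; apply: Nx.
Qed.

Lemma vanishing_fam_op M :
  (forall e, in01 e -> forall z, A z -> A' (T e z) /\ N' (T e z) <= M * N z) ->
  vanishing_fam A N x -> vanishing_fam A' N' (fun e => T e (x e)).
Proof.
move=> bT [Ax Nx]; split=> [e e01|d d_gt0]; first by case: (bT e e01 _ (Ax e e01)).
have [eta eta_gt0 Nxd] := Nx _ (divDr1_gt0 (normr_ge0 M) d_gt0).
exists eta => // e e01 lt_e_eta; have [A'T NT] := bT e e01 _ (Ax e e01).
apply: le_trans (le_normlM (normed_ge0 nA' A'T) (normed_ge0 nA (Ax e e01)) NT) _.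
apply: le_trans (mulr_divDr1_le (normr_ge0 M) d_gt0).
by apply: ler_wpM2l => //; apply: Nxd.
Qed.

End FamiliesUnderOperators.

Lemma vanishing_fam_small_op (V W : lmodType K) (A : V -> Prop) (N : V -> K)
    (A' : W -> Prop) (N' : W -> K) (T : K -> V -> W) (x : K -> V) :
  (forall e, in01 e -> forall z, A z -> A' (T e z)) ->
  (forall d, 0 < d -> exists2 eta, 0 < eta & forall e, in01 e -> e < eta ->
     forall z, A z -> N' (T e z) <= d * N z) ->
  bounded_fam A N x -> vanishing_fam A' N' (fun e => T e (x e)).
Proof.
move=> AT smallT [Ax [Mx Mx_ge0 Nx]]; split=> [e e01|d d_gt0]; first exact: AT (Ax e e01).
have [eta eta_gt0 NT] := smallT _ (divDr1_gt0 Mx_ge0 d_gt0).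
exists eta => // e e01 lt_e_eta; apply: le_trans (NT e e01 lt_e_eta _ (Ax e e01)) _.
apply: le_trans (mulr_divDr1_le Mx_ge0 d_gt0); rewrite mulrC.
by apply: ler_wpM2r; [exact: ltW (divDr1_gt0 Mx_ge0 d_gt0) | apply: Nx].
Qed.

Lemma vanishing_fam_weak_op (V W : lmodType K) (A1 A0 : V -> Prop) (N1 N0 : V -> K)
    (A' : W -> Prop) (N' : W -> K) (T : V -> W) (x : K -> V) :
  (forall z, A1 z -> A' (T z)) ->
  (forall eta, 0 < eta -> exists c, 0 < c /\
     forall z, A1 z -> N' (T z) <= c * N0 z + eta * N1 z) ->
  bounded_fam A1 N1 x -> vanishing_fam A0 N0 x -> vanishing_fam A' N' (fun e => T (x e)).
Proof.
move=> AT weakT [A1x [M1 M1_ge0 N1x]] [_ N0x].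
split=> [e e01|d d_gt0]; first exact: AT (A1x e e01).
have d2_gt0 : 0 < d / 2 by rewrite divr_gt0.
have [c [c_gt0 NT]] := weakT _ (divDr1_gt0 M1_ge0 d2_gt0).
have [eta eta_gt0 N0xd] := N0x _ (divDr1_gt0 (ltW c_gt0) d2_gt0).
exists eta => // e e01 lt_e_eta; apply: le_trans (NT _ (A1x e e01)) _.
rewrite [leRHS]splitr; apply: lerD.
  apply: le_trans (mulr_divDr1_le (ltW c_gt0) d2_gt0).
  by apply: ler_wpM2l; [exact: ltW | apply: N0xd].
apply: le_trans (mulr_divDr1_le M1_ge0 d2_gt0); rewrite [leRHS]mulrC.
by apply: ler_wpM2l; [exact: ltW (divDr1_gt0 M1_ge0 d2_gt0) | apply: N1x].
Qed.

End Families.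

Arguments in01_half {K}.
Arguments vanishing_scalar_id {K}.

Lemma taylor_rem_recr (K : numFieldType) (V : lmodType K) (e : K) (X : V)
    (c : nat -> V) (m k : nat) :
  e != 0 -> (m <= k.+1)%N ->
  e ^- k *: (X - \sum_(m <= i < k.+1) e ^+ i *: c i)
  = e *: (c k.+1 + e ^- k.+1 *: (X - \sum_(m <= i < k.+2) e ^+ i *: c i)).
Proof.
move=> e_neq0 le_mk; rewrite (big_nat_recr k.+1) //= opprD addrA.
set D := X - _; rewrite [in RHS]scalerBr scalerA mulVf ?expf_neq0 // scale1r.
rewrite addrC subrK scalerA; congr (_ *: _).
by rewrite exprS invfM mulrA mulfV // mul1r.
Qed.

Section Expansion.
Variables (K : numFieldType) (V : lmodType K) (n : nat).
Variables (B : nat -> V -> Prop) (N : nat -> V -> K).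
Variables (L : nat -> V -> V) (Leps : K -> V -> V) (lam : K) (h : V) (nu : V -> K).
Variables (D0 : V -> Prop) (Rl : V -> V) (lameps : K -> K) (heps : K -> V).

Hypotheses (B0_full : forall x, B 0%N x)
  (B_succ : forall i, (i <= n)%N -> forall x, B i.+1 x -> B i x)
  (B_banach : forall i, (i <= n.+1)%N -> banach_on (B i) (N i))
  (L_linear : forall j, (j <= n)%N -> linear_on (B j) (L j))
  (h_in : B n.+1 h)
  (nu_linear : forall (a : K) x y, nu (a *: x + y) = a * nu x + nu y)
  (nu_L0 : forall f, nu (L 0%N f) = lam * nu f)
  (L0_h : L 0%N h = lam *: h)
  (nu_h : nu h = 1)
  (D0_subspace : subspace D0)
  (B1_D0 : forall x, B 1%N x -> D0 x)
  (Rl_inv : forall f, D0 f -> L 0%N (Rl f) - (lam * nu (Rl f)) *: h - lam *: Rl f = f)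
  (Rl_uniq : forall f, D0 f -> forall g1 g2,
      L 0%N g1 - (lam * nu g1) *: h - lam *: g1 = f ->
      L 0%N g2 - (lam * nu g2) *: h - lam *: g2 = f -> g1 = g2)
  (Leps_linear : forall e, in01 e -> linear_on (fun _ => True) (Leps e))
  (heps_eigen : forall e, in01 e ->
     [/\ B n.+1 (heps e), Leps e (heps e) = lameps e *: heps e & nu (heps e) != 0])
  (nu_bounded : exists M : K, forall f, `|nu f| <= M * N 0%N f)
  (L_bounded : forall j i, (j <= n)%N -> (j <= i <= n.+1)%N ->
     bounded_op (B i) (B (i - j)%N) (N i) (N (i - j)%N) (L j))
  (Ltilde_bounded : forall j i, (j <= n)%N -> (j <= i <= n.+1)%N ->
     exists M : K, forall e, in01 e -> forall x, B i x ->
       B (i - j)%N (Ltilde L Leps j e x) /\ N (i - j)%N (Ltilde L Leps j e x) <= M * N i x)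
  (g_bounded : forall i, (i <= n.+1)%N ->
     exists M : K, forall e, in01 e -> N i (geps nu heps e) <= M)
  (Rl_bounded10 : bounded_op (B 1%N) (B 0%N) (N 1%N) (N 0%N) Rl)
  (Rl_bounded : forall i, (1 <= i <= n.+1)%N -> bounded_op (B i) (B i) (N i) (N i) Rl)
  (Rl_weak : forall eta : K, 0 < eta -> exists c : K, 0 < c /\
     forall f, B 1%N f -> N 0%N (Rl f) <= c * N 0%N f + eta * N 1%N f)
  (Ltilde_top_small : forall d : K, 0 < d -> exists2 eta : K, 0 < eta &
     forall e, in01 e -> e < eta -> forall x, B n.+1 x ->
       N 0%N (Ltilde L Leps n e x) <= d * N n.+1 x).

Let S := Sop Rl h nu.
Let g := geps nu heps.
Let gc := gk L S lam h nu.
Let lc := lamk L S lam h nu.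
Let gt := gtilde L S lam h nu heps.
Let Lt := Ltilde L Leps.

Lemma normed_B i : (i <= n.+1)%N -> normed_subspace (B i) (N i).
Proof. by move=> /B_banach[]. Qed.

Lemma subspace_B i : (i <= n.+1)%N -> subspace (B i).
Proof. by move=> /normed_B[]. Qed.

Lemma B_nested i j x : (i <= j <= n.+1)%N -> B j x -> B i x.
Proof.
case/andP; elim: j => [|j IH] le_ij le_jn; first by rewrite leqn0 in le_ij; move/eqP: le_ij ->.
case: (ltngtP i j.+1) le_ij => // [lt_ij _ | -> //] Bx.
by apply: IH (B_succ _ Bx); lia.
Qed.

Let nu_linear_on : forall a x y, True -> True ->
  (nu (a *: x + y) : K^o) = a *: (nu x : K^o) + nu y.
Proof. by move=> a x y _ _; apply: nu_linear. Qed.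

Lemma nuD x y : nu (x + y) = nu x + nu y.
Proof. exact (linear_onD nu_linear_on I I). Qed.

Lemma nuB x y : nu (x - y) = nu x - nu y.
Proof. exact (linear_onB (subspaceT V) nu_linear_on I I). Qed.

Lemma nuZ a x : nu (a *: x) = a * nu x.
Proof. exact (linear_onZ (subspaceT V) nu_linear_on a I). Qed.

Lemma nu_sum_nat m p (F : nat -> V) :
  nu (\sum_(m <= i < p) F i) = \sum_(m <= i < p) nu (F i).
Proof. exact (linear_on_sum_nat (subspaceT V) nu_linear_on (fun _ _ => I)). Qed.

Lemma B_h i : (i <= n.+1)%N -> B i h.
Proof. by move=> le_in; apply: (@B_nested i n.+1) h_in; rewrite le_in leqnn. Qed.

Lemma D0_h : D0 h.
Proof. exact: B1_D0 (B_h _). Qed.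

Let RmI y := L 0%N y - (lam * nu y) *: h - lam *: y.

Lemma L0_linear : linear_on (fun _ => True) (L 0%N).
Proof. by move=> a x y _ _; apply: (L_linear (leq0n n)). Qed.

Lemma RmI_linear : linear_on (fun _ => True) RmI.
Proof.
move=> a x y _ _; rewrite /RmI L0_linear // nu_linear mulrDr scalerDl scalerDr.
rewrite !scalerBr !scalerA mulrCA [lam * a]mulrC.
by rewrite !opprD !addrA [LHS](ACl (1*3*5*2*4*6)).
Qed.

Lemma Rl_unique f y : D0 f -> RmI y = f -> y = Rl f.
Proof. by move=> D0f RmIy; apply: (Rl_uniq D0f RmIy (Rl_inv D0f)). Qed.

Lemma Rl_linear : linear_on D0 Rl.
Proof.
move=> a x y D0x D0y; apply/esym/Rl_unique.
  by apply: subspaceD => //; apply: subspaceZ.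
by rewrite RmI_linear // /RmI !Rl_inv.
Qed.

Lemma S_linear : linear_on D0 S.
Proof.
move=> a x y D0x D0y; have D0P z : D0 z -> D0 (z - nu z *: h).
  by move=> D0z; apply: subspaceB => //; apply: subspaceZ D0_h.
rewrite /S /Sop -(Rl_linear _ (D0P _ D0x) (D0P _ D0y)); congr Rl.
rewrite nu_linear scalerDl scalerBr scalerA !opprD !addrA.
by rewrite [LHS](ACl (1*3*2*4)).
Qed.

Lemma size_coefs m : size (coefs L S lam h nu m) = m.+1.
Proof. by elim: m => //= m IH; rewrite size_rcons IH. Qed.

Lemma nth_coefs m k : (k <= m)%N ->
  nth (0, 0) (coefs L S lam h nu m) k = nth (0, 0) (coefs L S lam h nu k) k.
Proof.
elim: m => [|m IH]; first by rewrite leqn0 => /eqP->.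
rewrite leq_eqVlt => /orP[/eqP-> // | lt_km].
by rewrite /= nth_rcons size_coefs lt_km IH.
Qed.

Lemma lamk_recr k : lc k.+1 = \sum_(1 <= j < k.+2) nu (L j (gc (k.+1 - j))).
Proof.
rewrite /lc /lamk /= nth_rcons size_coefs ltnn eqxx /=.
by apply: eq_big_nat => j /andP[j_ge1 _]; rewrite nth_coefs //; lia.
Qed.

Lemma gk_recr k :
  gc k.+1 = \sum_(1 <= j < k.+2) S (lc j *: gc (k.+1 - j) - L j (gc (k.+1 - j))).
Proof.
rewrite /gc /gk /= nth_rcons size_coefs ltnn eqxx /=.
apply: eq_big_nat => j /andP[j_ge1 j_le]; rewrite nth_coefs; last by lia.
rewrite nth_rcons size_coefs; case: ltnP => [lt_jk | ge_jk]; first by rewrite nth_coefs.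
have -> : j = k.+1 by lia.
by rewrite eqxx /lc /lamk /= nth_rcons size_coefs ltnn eqxx.
Qed.

Lemma L_in j i x : (j <= n)%N -> (i + j <= n.+1)%N -> B (i + j) x -> B i (L j x).
Proof.
move=> le_jn le_ijn Bx; have le_j_ij : (j <= i + j <= n.+1)%N by rewrite leq_addl.
by have [M /(_ x Bx)[+ _]] := L_bounded le_jn le_j_ij; rewrite addnK.
Qed.

Lemma Ltilde_in j i e x : in01 e -> (j <= n)%N -> (i + j <= n.+1)%N -> B (i + j) x ->
  B i (Lt j e x).
Proof.
move=> e01 le_jn le_ijn Bx; have le_j_ij : (j <= i + j <= n.+1)%N by rewrite leq_addl.
by have [M /(_ e e01 x Bx)[+ _]] := Ltilde_bounded le_jn le_j_ij; rewrite addnK.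
Qed.

Lemma S_in i x : (i <= n.+1)%N -> B i x -> B i (S x).
Proof.
case: i => [_ _ | i le_in Bx]; first exact: B0_full.
have le_1_i : (1 <= i.+1 <= n.+1)%N by rewrite le_in.
have Px : B i.+1 (x - nu x *: h).
  exact: (subspaceB (subspace_B le_in) Bx (subspaceZ (subspace_B le_in) _ (B_h le_in))).
by have [M /(_ _ Px)[]] := Rl_bounded le_1_i.
Qed.

Lemma g_in i e : in01 e -> (i <= n.+1)%N -> B i (g e).
Proof.
move=> e01 le_in; have [Bh _ _] := heps_eigen e01.
apply: (@B_nested i n.+1); first by rewrite le_in leqnn.
exact: (subspaceZ (subspace_B (leqnn _)) _ Bh).
Qed.

Lemma gk_in k i : (i + k <= n.+1)%N -> B i (gc k).
Proof.
elim/ltn_ind: k i => -[_ i | k IH [|i]] le_ikn; first by rewrite addn0 in le_ikn; apply: B_h.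
  exact: B0_full.
have le_in : (i.+1 <= n.+1)%N by lia.
rewrite gk_recr; apply: (subspace_sum_nat (subspace_B le_in)) => j /andP[j_ge1 le_jk].
apply: (S_in le_in); apply: (subspaceB (subspace_B le_in)).
  by apply: (subspaceZ (subspace_B le_in)); apply: IH; lia.
by apply: L_in; [lia | lia | apply: IH; lia].
Qed.

Lemma gtilde_in k i e : in01 e -> (i + k <= n.+1)%N -> B i (gt k e).
Proof.
move=> e01 le_ikn; have le_in : (i <= n.+1)%N by lia.
apply: (subspaceZ (subspace_B le_in)); apply: (subspaceB (subspace_B le_in) (g_in e01 le_in)).
apply: (subspace_sum_nat (subspace_B le_in)) => i' /andP[_ le_i'k].
by apply: (subspaceZ (subspace_B le_in)); apply: gk_in; lia.
Qed.

Lemma gtilde0 e : gt 0%N e = g e - h.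
Proof. by rewrite /gt /gtilde expr0 invr1 scale1r big_nat1 expr0 scale1r. Qed.

Lemma gtilde_recr k e : in01 e -> gt k e = e *: (gc k.+1 + gt k.+1 e).
Proof. by move=> e01; apply: taylor_rem_recr; rewrite ?in01_neq0. Qed.

Lemma Ltilde0 e x : Lt 0%N e x = Leps e x - L 0%N x.
Proof. by rewrite /Lt /Ltilde expr0 invr1 scale1r big_geq // subr0. Qed.

Lemma Ltilde_recr k e x : in01 e -> Lt k e x = e *: (L k.+1 x + Lt k.+1 e x).
Proof. by move=> e01; apply: taylor_rem_recr; rewrite ?in01_neq0. Qed.

Lemma nu_g e : in01 e -> nu (g e) = 1.
Proof. by move=> e01; rewrite /g /geps nuZ mulVf //; case: (heps_eigen e01). Qed.

Lemma Leps_g e : in01 e -> Leps e (g e) = lameps e *: g e.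
Proof.
move=> e01; have [_ Lh _] := heps_eigen e01.
by rewrite /g /geps (linear_onZ (subspaceT V) (Leps_linear e01)) // Lh !scalerA mulrC.
Qed.

Definition Lrem m e := \sum_(1 <= j < m.+1) L j (gt (m - j)%N e) + Lt m e (g e).
Definition src m e :=
  \sum_(1 <= j < m.+1) lc j *: gt (m - j)%N e + nu (Lrem m e) *: g e - Lrem m e.
Definition coef_Lsum m := \sum_(1 <= j < m.+1) L j (gc (m - j)%N).
Definition coef_src m :=
  \sum_(1 <= j < m.+1) (lc j *: gc (m - j)%N - L j (gc (m - j)%N)).

Lemma Lrem_in m i e : in01 e -> (m <= n)%N -> (i + m <= n.+1)%N -> B i (Lrem m e).
Proof.
move=> e01 le_mn le_imn; have sB : subspace (B i) by apply: subspace_B; lia.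
apply: (subspaceD sB).
  apply: (subspace_sum_nat sB) => j /andP[j_ge1 le_jm].
  by apply: L_in; [lia | lia | apply: gtilde_in => //; lia].
by apply: Ltilde_in => //; apply: g_in => //; lia.
Qed.

Lemma src_in m i e : in01 e -> (m <= n)%N -> (i + m <= n.+1)%N -> B i (src m e).
Proof.
move=> e01 le_mn le_imn; have sB : subspace (B i) by apply: subspace_B; lia.
apply: (subspaceB sB); last exact: Lrem_in.
apply: (subspaceD sB); last by apply: (subspaceZ sB); apply: g_in => //; lia.
apply: (subspace_sum_nat sB) => j /andP[j_ge1 le_jm].
by apply: (subspaceZ sB); apply: gtilde_in => //; lia.
Qed.

Lemma coef_src_term_in m i j : (m <= n)%N -> (i + m <= n.+1)%N -> (1 <= j <= m)%N ->
  B i (lc j *: gc (m - j)%N - L j (gc (m - j)%N)).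
Proof.
move=> le_mn le_imn /andP[j_ge1 le_jm]; have sB : subspace (B i) by apply: subspace_B; lia.
apply: (subspaceB sB); first by apply: (subspaceZ sB); apply: gk_in; lia.
by apply: L_in; [lia | lia | apply: gk_in; lia].
Qed.

Lemma coef_src_in m i : (m <= n)%N -> (i + m <= n.+1)%N -> B i (coef_src m).
Proof.
move=> le_mn le_imn; have sB : subspace (B i) by apply: subspace_B; lia.
by apply: (subspace_sum_nat sB) => j le_jm; apply: coef_src_term_in => //; lia.
Qed.

Lemma gk_S k : (k.+1 <= n)%N -> gc k.+1 = S (coef_src k.+1).
Proof.
move=> lt_kn; rewrite gk_recr /coef_src (linear_on_sum_nat D0_subspace S_linear) //.
by move=> j le_jk; apply: B1_D0; apply: coef_src_term_in; lia.
Qed.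

Lemma lamk_Lsum k : lc k.+1 = nu (coef_Lsum k.+1).
Proof. by rewrite lamk_recr /coef_Lsum nu_sum_nat. Qed.

Lemma Lrem_recr k e : in01 e -> (k.+1 <= n)%N ->
  e^-1 *: Lrem k e = Lrem k.+1 e + coef_Lsum k.+1.
Proof.
move=> e01 lt_kn; have e_neq0 := in01_neq0 e01.
have Lsum : \sum_(1 <= j < k.+1) L j (gt (k - j)%N e) =
    \sum_(1 <= j < k.+1) e *: (L j (gc (k.+1 - j)%N) + L j (gt (k.+1 - j)%N e)).
  apply: eq_big_nat => j /andP[j_ge1 le_jk]; have le_jn : (j <= n)%N by lia.
  rewrite gtilde_recr // subSn; last by lia.
  have Bgc : B j (gc (k - j).+1) by apply: gk_in; lia.
  have Bgt : B j (gt (k - j).+1 e) by apply: gtilde_in => //; lia.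
  have sB : subspace (B j) by apply: subspace_B; lia.
  rewrite (linear_onZ sB (L_linear le_jn)); last exact: (subspaceD sB).
  by rewrite (linear_onD (L_linear le_jn)).
rewrite /Lrem Lsum (Ltilde_recr _ _ e01) -scaler_sumr -scalerDr scalerA mulVf // scale1r.
rewrite big_split /= (big_nat_recr k.+1) //= subnn gtilde0.
rewrite /coef_Lsum (big_nat_recr k.+1) //= subnn.
have le_k1n : (k.+1 <= n.+1)%N by lia.
rewrite (linear_onB (subspace_B le_k1n) (L_linear lt_kn) (g_in e01 le_k1n) (B_h le_k1n)).
by rewrite !addrA [RHS](ACl ((((5*1)*2)*4)*(3*6))) /= addNr addr0.
Qed.

Lemma src_recr k e : in01 e -> (k.+1 <= n)%N ->
  e^-1 *: src k e - coef_src k.+1 = src k.+1 e.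
Proof.
move=> e01 lt_kn; have e_neq0 := in01_neq0 e01.
have gsum : e^-1 *: \sum_(1 <= j < k.+1) lc j *: gt (k - j)%N e =
    \sum_(1 <= j < k.+1) lc j *: gc (k.+1 - j)%N +
    \sum_(1 <= j < k.+1) lc j *: gt (k.+1 - j)%N e.
  rewrite scaler_sumr -big_split; apply: eq_big_nat => j /andP[j_ge1 le_jk].
  rewrite gtilde_recr // -subSn; last by lia.
  by rewrite [LHS]scalerA [LHS]scalerA mulrAC mulVf // mul1r scalerDr.
have nuLrem : e^-1 * nu (Lrem k e) = nu (Lrem k.+1 e) + lc k.+1.
  by rewrite -nuZ Lrem_recr // nuD lamk_Lsum.
have -> : coef_src k.+1 =
    \sum_(1 <= j < k.+1) lc j *: gc (k.+1 - j)%N + lc k.+1 *: h - coef_Lsum k.+1.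
  by rewrite /coef_src sumrB (big_nat_recr k.+1) //= subnn.
have -> : src k.+1 e = \sum_(1 <= j < k.+1) lc j *: gt (k.+1 - j)%N e
    + lc k.+1 *: (g e - h) + nu (Lrem k.+1 e) *: g e - Lrem k.+1 e.
  by rewrite /src (big_nat_recr k.+1) //= subnn gtilde0.
rewrite /src scalerBr scalerDr scalerA nuLrem gsum Lrem_recr //.
rewrite scalerDl scalerBr !opprD !opprK !addrA.
by rewrite [LHS](ACl ((2*4*9*3*5*6)*(1*8)*(7*10))) /= subrr addr0 addNr addr0.
Qed.

Lemma src0 e : in01 e -> src 0%N e = L 0%N (g e) - lam *: g e.
Proof.
move=> e01; rewrite /src /Lrem !big_geq // !add0r Ltilde0 Leps_g //.
rewrite nuB nuZ nu_L0 nu_g // !mulr1 scalerBl opprB addrA.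
by rewrite addrC !addrA addNr add0r addrC.
Qed.

Lemma gtilde0_S e : in01 e -> gt 0%N e = S (src 0%N e).
Proof.
move=> e01; have D0src : D0 (src 0%N e) by apply: B1_D0; apply: src_in.
have nu_src : nu (src 0%N e) = 0 by rewrite src0 // nuB nu_L0 (nuZ lam) subrr.
rewrite /S /Sop nu_src scale0r subr0; apply: Rl_unique => //.
rewrite src0 // gtilde0 /RmI.
rewrite (linear_onB (subspace_B (leq0n _)) (L_linear (leq0n n)) (B0_full _) (B0_full _)).
by rewrite L0_h nuB nu_g // nu_h subrr mulr0 scale0r subr0 scalerBr opprB addrA subrK.
Qed.

Lemma gtilde_S m e : in01 e -> (m <= n)%N -> gt m e = S (src m e).
Proof.
move=> e01; elim: m => [_ | k IH lt_kn]; first exact: gtilde0_S.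
have D0src : D0 (src k e) by apply: B1_D0; apply: src_in => //; lia.
have D0coef : D0 (coef_src k.+1) by apply: B1_D0; apply: coef_src_in => //; lia.
have -> : gt k.+1 e = e^-1 *: gt k e - gc k.+1.
  by rewrite (gtilde_recr k e01) scalerA mulVf ?in01_neq0 // scale1r addrAC subrr add0r.
rewrite IH ?(ltnW lt_kn) // gk_S // -(linear_onZ D0_subspace S_linear _ D0src).
by rewrite -(linear_onB D0_subspace S_linear _ D0coef) ?src_recr //; apply: (subspaceZ D0_subspace).
Qed.

Local Notation bnd i := (bounded_fam (B i) (N i)).
Local Notation van i := (vanishing_fam (B i) (N i)).

Lemma bounded_g i : (i <= n.+1)%N -> bnd i g.
Proof.
move=> le_in; have [M NgM] := g_bounded le_in.
split=> [e e01|]; first exact: g_in.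
exists M => [|e e01]; last exact: NgM.
exact: (le_trans (normed_ge0 (normed_B le_in) (g_in in01_half le_in)) (NgM _ in01_half)).
Qed.

Lemma bounded_nu x : bnd 0%N x -> bounded_scalar (fun e => nu (x e)).
Proof.
have [M nuM] := nu_bounded.
apply: (bounded_fam_op (normed_B (leq0n _)) (normed_subspace_scalar K) (T := fun _ => nu)
  (M := M)).
by move=> e _ z _; split.
Qed.

Lemma vanishing_nu x : van 0%N x -> vanishing_scalar (fun e => nu (x e)).
Proof.
have [M nuM] := nu_bounded.
apply: (vanishing_fam_op (normed_B (leq0n _)) (normed_subspace_scalar K) (T := fun _ => nu)
  (M := M)).
by move=> e _ z _; split.
Qed.

Lemma bounded_proj i x : (i <= n.+1)%N -> bnd 0%N x -> bnd i x ->
  bnd i (fun e => x e - nu (x e) *: h).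
Proof.
move=> le_in bx0 bxi; have nBi := normed_B le_in; apply: (bounded_famB nBi bxi).
exact: (bounded_famZ nBi (bounded_nu bx0) (bounded_fam_cst nBi (B_h le_in))).
Qed.

Lemma vanishing_proj x : van 0%N x -> van 0%N (fun e => x e - nu (x e) *: h).
Proof.
move=> vx; have nB0 := normed_B (leq0n n.+1); apply: (vanishing_famB nB0 vx).
exact: (vanishing_famZl nB0 (vanishing_nu vx) (bounded_fam_cst nB0 (B0_full h))).
Qed.

Lemma bounded_S i x : (i <= n.+1)%N -> bnd 0%N x -> bnd 1%N x -> bnd i x ->
  bnd i (fun e => S (x e)).
Proof.
case: i => [_ bx0 bx1 _ | i le_in bx0 _ bxi].
  have [M RlM] := Rl_bounded10.
  apply: (bounded_fam_op (normed_B (ltn0Sn n)) (normed_B (leq0n _)) (T := fun _ => Rl)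
    (M := M)).
    by move=> e _ z /RlM.
  exact: (bounded_proj (ltn0Sn n) bx0 bx1).
have le_1i : (1 <= i.+1 <= n.+1)%N by rewrite le_in.
have [M RlM] := Rl_bounded le_1i.
apply: (bounded_fam_op (normed_B le_in) (normed_B le_in) (T := fun _ => Rl) (M := M)).
  by move=> e _ z /RlM.
exact: (bounded_proj le_in bx0 bxi).
Qed.

Lemma vanishing_S0 x : bnd 0%N x -> bnd 1%N x -> van 0%N x -> van 0%N (fun e => S (x e)).
Proof.
move=> bx0 bx1 vx.
apply: (vanishing_fam_weak_op (A1 := B 1%N) (N1 := N 1%N) _ Rl_weak).
- by move=> z _; apply: B0_full.
- exact: (bounded_proj (ltn0Sn n) bx0 bx1).
- exact: (vanishing_proj vx).
Qed.

Lemma L_bounded_shift j i : (j <= n)%N -> (i + j <= n.+1)%N ->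
  bounded_op (B (i + j)) (B i) (N (i + j)) (N i) (L j).
Proof.
move=> le_jn le_ijn; have le_j_ij : (j <= i + j <= n.+1)%N by rewrite leq_addl.
by have := L_bounded le_jn le_j_ij; rewrite addnK.
Qed.

Lemma bounded_L j i x : (j <= n)%N -> (i + j <= n.+1)%N -> bnd (i + j) x ->
  bnd i (fun e => L j (x e)).
Proof.
move=> le_jn le_ijn bx; have [M LM] := L_bounded_shift le_jn le_ijn.
have le_in : (i <= n.+1)%N by lia.
apply: (bounded_fam_op (normed_B le_ijn) (normed_B le_in) (T := fun _ => L j) (M := M) _ bx).
by move=> e _ z /LM.
Qed.

Lemma vanishing_L j i x : (j <= n)%N -> (i + j <= n.+1)%N -> van (i + j) x ->
  van i (fun e => L j (x e)).
Proof.
move=> le_jn le_ijn bx; have [M LM] := L_bounded_shift le_jn le_ijn.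
have le_in : (i <= n.+1)%N by lia.
apply: (vanishing_fam_op (normed_B le_ijn) (normed_B le_in) (T := fun _ => L j) (M := M) _ bx).
by move=> e _ z /LM.
Qed.

Lemma bounded_Ltilde j i x : (j <= n)%N -> (i + j <= n.+1)%N -> bnd (i + j) x ->
  bnd i (fun e => Lt j e (x e)).
Proof.
move=> le_jn le_ijn; have le_j_ij : (j <= i + j <= n.+1)%N by rewrite leq_addl.
have [M LtM] := Ltilde_bounded le_jn le_j_ij; rewrite addnK in LtM.
have le_in : (i <= n.+1)%N by lia.
exact: (bounded_fam_op (normed_B le_ijn) (normed_B le_in) LtM).
Qed.

Section BoundedStep.
Variable m : nat.
Hypotheses (le_mn : (m <= n)%N)
  (bounded_lower : forall k, (k < m)%N -> forall i, (i + k <= n.+1)%N -> bnd i (gt k)).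

Lemma bounded_Lrem i : (i + m <= n.+1)%N -> bnd i (Lrem m).
Proof.
move=> le_imn; have nBi : normed_subspace (B i) (N i) by apply: normed_B; lia.
apply: (bounded_famD nBi); last by apply: bounded_Ltilde => //; apply: bounded_g.
apply: (bounded_fam_sum nBi) => j; rewrite mem_index_iota => /andP[j_ge1 le_jm].
by apply: bounded_L; [lia | lia | apply: bounded_lower; lia].
Qed.

Lemma bounded_src i : (i + m <= n.+1)%N -> bnd i (src m).
Proof.
move=> le_imn; have nBi : normed_subspace (B i) (N i) by apply: normed_B; lia.
apply: (bounded_famB nBi); last exact: bounded_Lrem.
apply: (bounded_famD nBi).
  apply: (bounded_fam_sum nBi) => j; rewrite mem_index_iota => /andP[j_ge1 le_jm].
  by apply: (bounded_famZ nBi (bounded_scalar_cst _)); apply: bounded_lower; lia.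
apply: (bounded_famZ nBi); last by apply: bounded_g; lia.
by apply: bounded_nu; apply: bounded_Lrem; lia.
Qed.

End BoundedStep.

Lemma bounded_gtilde m i : (m <= n)%N -> (i + m <= n.+1)%N -> bnd i (gt m).
Proof.
elim/ltn_ind: m i => m IH i le_mn le_imn.
have bounded_lower k : (k < m)%N -> forall i, (i + k <= n.+1)%N -> bnd i (gt k).
  by move=> lt_km i' le_ikn; apply: IH => //; lia.
apply: (eq_bounded_fam (x := fun e => S (src m e))) => [e e01|].
  by rewrite gtilde_S.
by apply: bounded_S; [lia | apply: bounded_src => //; lia ..].
Qed.

Lemma vanishing_gtilde k i : (k < n)%N -> (i + k <= n)%N -> van i (gt k).
Proof.
move=> lt_kn le_ikn; have nBi : normed_subspace (B i) (N i) by apply: normed_B; lia.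
apply: (eq_vanishing_fam (x := fun e => e *: (gc k.+1 + gt k.+1 e))) => [e e01|].
  by rewrite (gtilde_recr k).
apply: (vanishing_famZl nBi vanishing_scalar_id).
apply: (bounded_famD nBi); first by apply: (bounded_fam_cst nBi); apply: gk_in; lia.
by apply: bounded_gtilde; lia.
Qed.

Lemma vanishing_Lrem_top : van 0%N (Lrem n).
Proof.
have nB0 := normed_B (leq0n n.+1).
apply: (vanishing_famD nB0).
  apply: (vanishing_fam_sum nB0) => j; rewrite mem_index_iota => /andP[j_ge1 le_jn].
  by apply: vanishing_L; [lia | lia | apply: vanishing_gtilde; lia].
apply: (vanishing_fam_small_op _ Ltilde_top_small (bounded_g (leqnn _))).
by move=> e _ z _; apply: B0_full.
Qed.

Lemma vanishing_src_top : van 0%N (src n).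
Proof.
have nB0 := normed_B (leq0n n.+1).
apply: (vanishing_famB nB0 _ vanishing_Lrem_top); apply: (vanishing_famD nB0).
  apply: (vanishing_fam_sum nB0) => j; rewrite mem_index_iota => /andP[j_ge1 le_jn].
  by apply: (vanishing_famZr nB0 (bounded_scalar_cst _)); apply: vanishing_gtilde; lia.
exact: (vanishing_famZl nB0 (vanishing_nu vanishing_Lrem_top) (bounded_g (leq0n _))).
Qed.

Lemma bounded_src_top i : (i <= 1)%N -> bnd i (src n).
Proof.
move=> le_i1; apply: (bounded_src (leqnn n)); last by lia.
by move=> k lt_kn i' le_ikn; apply: bounded_gtilde; lia.
Qed.

Lemma vanishing_gtilde_top : van 0%N (gt n).
Proof.
apply: (eq_vanishing_fam (x := fun e => S (src n e))) => [e e01|].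
  by rewrite gtilde_S.
exact: (vanishing_S0 (bounded_src_top (leq0n 1)) (bounded_src_top (leqnn 1)) vanishing_src_top).
Qed.

Lemma vanishing_famW i x : van i x -> forall d : K, 0 < d -> exists eta : K,
  0 < eta /\ forall e, in01 e -> e < eta -> N i (x e) <= d.
Proof. by move=> [_ vx] d /vx[eta]; exists eta. Qed.

Theorem gtilde_asymptotics :
  [/\ forall d : K, 0 < d -> exists eta : K, 0 < eta /\
        forall e, in01 e -> e < eta -> N 0%N (gt n e) <= d,
      forall k i, (k + i <= n)%N -> forall d : K, 0 < d -> exists eta : K, 0 < eta /\
        forall e, in01 e -> e < eta -> N i (gt k e) <= d &
      forall k, (k <= n)%N -> exists M : K, forall e, in01 e ->
        B (n.+1 - k)%N (gt k e) /\ N (n.+1 - k)%N (gt k e) <= M].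
Proof.
split=> [|k i le_kin|k le_kn]; first exact: vanishing_famW vanishing_gtilde_top.
  apply: vanishing_famW; have [lt_kn | ge_kn] := ltnP k n; first by apply: vanishing_gtilde; lia.
  have -> : k = n by lia.
  have -> : i = 0%N by lia.
  exact: vanishing_gtilde_top.
have le_ind : (n.+1 - k + k <= n.+1)%N by lia.
have [Bgt [M _ NM]] := bounded_gtilde le_kn le_ind.
by exists M => e e01; split; [apply: Bgt | apply: NM].
Qed.

End Expansion.

Theorem perturbed_eigenvector_expansion (K : numFieldType) : theorem6_for K.
Proof.
move=> V n B N L Leps lam h nu D0 Rl lameps heps B0 B_succ B_banach L_linear _ _ h_in
  nu_linear nu_L0 L0_h nu_h D0_subspace B1_D0 Rl_inv Rl_uniq _ Leps_linear heps_eigen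
  nu_bounded L_bounded Ltilde_bounded g_bounded Rl_bounded10 Rl_bounded Rl_weak Ltilde_small.
have Ltilde_top_small d : 0 < d -> exists2 eta : K, 0 < eta & forall e, in01 e -> e < eta ->
    forall x, B n.+1 x -> N 0%N (Ltilde L Leps n e x) <= d * N n.+1 x.
  have le_nnn : (n <= n <= n)%N by rewrite leqnn.
  move=> /(Ltilde_small n n le_nnn)[eta [eta_gt0 small]].
  by exists eta => // e e01 lt_e_eta x /(small e e01 lt_e_eta)[_]; rewrite subnn.
exact: (gtilde_asymptotics B0 B_succ B_banach L_linear h_in nu_linear nu_L0 L0_h nu_h
  D0_subspace B1_D0 Rl_inv Rl_uniq Leps_linear heps_eigen nu_bounded L_bounded
  Ltilde_bounded g_bounded Rl_bounded10 Rl_bounded Rl_weak Ltilde_top_small).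
Qed.

Theorem mainTheorem6 : theorem6_for R /\ theorem6_for R[i].
Proof. by split; apply: perturbed_eigenvector_expansion. Qed.
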